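(* Let $G=\mathbb{Z}_2\times\mathbb{Z}_2\times\mathbb{Z}_2$ and let $M$ be a finite-dimensional graded pointed Majid algebra over $\mathbbm{k}$ with group of group-likes $G$, generated by $G$ and quasi-commutative skew-primitive elements $X_1,\dots,X_N$ (i.e. $X_iX_j=q_{j,i}X_jX_i$ for $i\ne j$) with $\Delta(X_i)=X_i\otimes1+x_i\otimes X_i$, where $x_1,x_2,x_3$ generate $G$ (so $G=\langle x_1\rangle\times\langle x_2\rangle\times\langle x_3\rangle$). Suppose the associator of $M$ restricted to $G$ has the form $$\Phi(x_1^{i_1}x_2^{i_2}x_3^{i_3},x_1^{j_1}x_2^{j_2}x_3^{j_3},x_1^{k_1}x_2^{k_2}x_3^{k_3})=\prod_{l=1}^3(-1)^{a_li_l[\frac{j_l+k_l}{2}]}\prod_{1\le s<t\le3}(-1)^{a_{st}i_t[\frac{j_s+k_s}{2}]}$$ ($i_l,j_l,k_l\in\{0,1\}$) with $a_l,a_{st}\in\{0,1\}$. Then $a_{12}=a_{13}=a_{23}=0$, i.e. $\Phi(x_1^{i_1}x_2^{i_2}x_3^{i_3},x_1^{j_1}x_2^{j_2}x_3^{j_3},x_1^{k_1}x_2^{k_2}x_3^{k_3})=\prod_{l=1}^3(-1)^{a_li_l[\frac{j_l+k_l}{2}]}$.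
   Context: $\mathbbm{k}$ algebraically closed of characteristic $0$; $[x]$ the integer part. A Majid algebra (coquasi-Hopf algebra) is a coalgebra with a unital non-associative multiplication that is a coalgebra map, an associator $\Phi$ (convolution-invertible normalized 3-cocycle) with $a_1(b_1c_1)\Phi(a_2,b_2,c_2)=\Phi(a_1,b_1,c_1)(a_2b_2)c_2$, and a quasi-antipode $(S,\alpha,\beta)$ satisfying the coquasi-Hopf axioms. Pointed: coradical $\mathbbm{k}G$, $G$ the group-likes; the associator restricts to a normalized 3-cocycle on $G$. Graded: coradically graded $M=\bigoplus M(n)$, $M(0)=\mathbbm{k}G$, respected by the structure maps, with $\Phi,\alpha,\beta$ vanishing when an argument has positive degree. Skew-primitive elements are elements $X$ with $\Delta(X)=X\otimes h+g\otimes X$, $g,h\in G$; ''generated by'' means generated as an algebra. *)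

(* Finite-dimensional Majid (coquasi-Hopf) algebras are
   represented in coordinates: M = 'rV[F]_n with standard basis bas i,
   and M (x) M is identified with 'M[F]_n via u (x) v := u^T *m v. *)
From HB Require Import structures.
From mathcomp Require Import all_boot all_order all_algebra.
Set Implicit Arguments. Unset Strict Implicit. Unset Printing Implicit Defensive.
Import Order.TTheory GRing.Theory Num.Theory.
Local Open Scope ring_scope.

Record majid_data (F : fieldType) (n : nat) := MajidData {
  mu_c    : 'I_n -> 'I_n -> 'rV[F]_n;        (* bas i * bas j *)
  one_v   : 'rV[F]_n;
  D_c     : 'I_n -> 'M[F]_n;                  (* Delta(bas k) = sum_(i,j) D_c k i j bas i (x) bas j *)
  eps_c   : 'I_n -> F;
  phi_c   : 'I_n -> 'I_n -> 'I_n -> F;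
  S_m     : 'M[F]_n;                          (* quasi-antipode: S u = u *m S_m *)
  alpha_c : 'I_n -> F;
  beta_c  : 'I_n -> F }.

Section MajidDefs.
Variables (F : fieldType) (n : nat) (M : majid_data F n).

Definition bas (i : 'I_n) : 'rV[F]_n := delta_mx 0 i.
Definition tens (u v : 'rV[F]_n) : 'M[F]_n := u^T *m v.

Definition mulM (u v : 'rV[F]_n) : 'rV[F]_n :=
  \sum_(i < n) \sum_(j < n) (u 0 i * v 0 j) *: mu_c M i j.
Definition comul (u : 'rV[F]_n) : 'M[F]_n := \sum_(k < n) u 0 k *: D_c M k.
Definition counit (u : 'rV[F]_n) : F := \sum_(k < n) u 0 k * eps_c M k.
Definition trilin (c : 'I_n -> 'I_n -> 'I_n -> F) (u v w : 'rV[F]_n) : F :=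
  \sum_(i < n) \sum_(j < n) \sum_(k < n) u 0 i * v 0 j * w 0 k * c i j k.
Definition linf (c : 'I_n -> F) (u : 'rV[F]_n) : F := \sum_(k < n) u 0 k * c k.
Definition PhiV := trilin (phi_c M).
Definition Sa (u : 'rV[F]_n) : 'rV[F]_n := u *m S_m M.
Definition unitM := one_v M.
Definition eps := eps_c M.
Definition phi := phi_c M.
Definition alpha := alpha_c M.
Definition beta := beta_c M.

(* Sweedler sums on a basis element bas k (vector-valued) *)
Definition sw2 {V : lmodType F} (k : 'I_n) (f : 'I_n -> 'I_n -> V) : V :=
  \sum_(i < n) \sum_(j < n) D_c M k i j *: f i j.
Definition sw3 {V : lmodType F} k (f : 'I_n -> 'I_n -> 'I_n -> V) : V :=
  sw2 k (fun i j => sw2 i (fun a b => f a b j)).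
Definition sw2s (k : 'I_n) (f : 'I_n -> 'I_n -> F) : F :=
  \sum_(i < n) \sum_(j < n) D_c M k i j * f i j.
Definition sw3s k (f : 'I_n -> 'I_n -> 'I_n -> F) : F :=
  sw2s k (fun i j => sw2s i (fun a b => f a b j)).
Definition sw4s k (f : 'I_n -> 'I_n -> 'I_n -> 'I_n -> F) : F :=
  sw3s k (fun a b c => sw2s c (fun c1 c2 => f a b c1 c2)).
Definition sw5s k (f : 'I_n -> 'I_n -> 'I_n -> 'I_n -> 'I_n -> F) : F :=
  sw4s k (fun a b c d => sw2s d (fun d1 d2 => f a b c d1 d2)).

(* ---- Majid algebra (coquasi-Hopf algebra) axioms, checked on basis
   elements (all axioms are multilinear in their arguments). ---- *)
Definition coassociative : Prop :=
  forall k a b c : 'I_n,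
    \sum_(i < n) D_c M k i c * D_c M i a b = \sum_(j < n) D_c M k a j * D_c M j b c.
Definition counital : Prop :=
  (forall k j : 'I_n, \sum_(i < n) eps i * D_c M k i j = (k == j)%:R) /\
  (forall k i : 'I_n, \sum_(j < n) D_c M k i j * eps j = (k == i)%:R).
Definition unital : Prop :=
  forall k, mulM unitM (bas k) = bas k /\ mulM (bas k) unitM = bas k.
Definition mul_coalg_map : Prop :=
  (forall a b, comul (mulM (bas a) (bas b)) =
     sw2 a (fun a1 a2 => sw2 b (fun b1 b2 =>
        tens (mulM (bas a1) (bas b1)) (mulM (bas a2) (bas b2))))) /\
  (forall a b, counit (mulM (bas a) (bas b)) = eps a * eps b) /\
  comul unitM = tens unitM unitM /\ counit unitM = 1.
Definition quasi_assoc : Prop :=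
  forall a b c,
    sw2 a (fun a1 a2 => sw2 b (fun b1 b2 => sw2 c (fun c1 c2 =>
      phi a2 b2 c2 *: mulM (bas a1) (mulM (bas b1) (bas c1))))) =
    sw2 a (fun a1 a2 => sw2 b (fun b1 b2 => sw2 c (fun c1 c2 =>
      phi a1 b1 c1 *: mulM (mulM (bas a2) (bas b2)) (bas c2)))).
Definition conv_inverse (pinv : 'I_n -> 'I_n -> 'I_n -> F) : Prop :=
  forall a b c,
    sw2s a (fun a1 a2 => sw2s b (fun b1 b2 => sw2s c (fun c1 c2 =>
      phi a1 b1 c1 * pinv a2 b2 c2))) = eps a * eps b * eps c /\
    sw2s a (fun a1 a2 => sw2s b (fun b1 b2 => sw2s c (fun c1 c2 =>
      pinv a1 b1 c1 * phi a2 b2 c2))) = eps a * eps b * eps c.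
Definition cocycle3 : Prop :=
  forall a b c d,
    sw2s a (fun a1 a2 => sw2s b (fun b1 b2 => sw2s c (fun c1 c2 =>
      sw2s d (fun d1 d2 =>
        PhiV (bas a1) (bas b1) (mulM (bas c1) (bas d1)) *
        PhiV (mulM (bas a2) (bas b2)) (bas c2) (bas d2))))) =
    sw2s a (fun a1 a2 => sw3s b (fun b1 b2 b3 => sw3s c (fun c1 c2 c3 =>
      sw2s d (fun d1 d2 =>
        phi b1 c1 d1 * PhiV (bas a1) (mulM (bas b2) (bas c2)) (bas d2) *
        phi a2 b3 c3)))).
Definition normalized : Prop :=
  forall a b,
    PhiV (bas a) unitM (bas b) = eps a * eps b /\
    PhiV unitM (bas a) (bas b) = eps a * eps b /\
    PhiV (bas a) (bas b) unitM = eps a * eps b.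
Definition antipode_ax1 : Prop :=
  (forall a, sw3 a (fun i j k => alpha j *: mulM (Sa (bas i)) (bas k)) = alpha a *: unitM) /\
  (forall a, sw3 a (fun i j k => beta j *: mulM (bas i) (Sa (bas k))) = beta a *: unitM) /\
  (forall a, sw5s a (fun a1 a2 a3 a4 a5 =>
       PhiV (bas a1) (Sa (bas a3)) (bas a5) * beta a2 * alpha a4) = eps a).
Definition antipode_ax2 (pinv : 'I_n -> 'I_n -> 'I_n -> F) : Prop :=
  forall a, sw5s a (fun a1 a2 a3 a4 a5 =>
       trilin pinv (Sa (bas a1)) (bas a3) (Sa (bas a5)) * alpha a2 * beta a4) = eps a.

Definition is_majid : Prop :=
  coassociative /\ counital /\ unital /\ mul_coalg_map /\
  quasi_assoc /\ cocycle3 /\ normalized /\ antipode_ax1 /\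
  exists pinv, conv_inverse pinv /\ antipode_ax2 pinv.

Definition grouplike (u : 'rV[F]_n) : Prop := u != 0 /\ comul u = tens u u.

Definition in_kG (u : 'rV[F]_n) : Prop :=
  exists s : seq (F * 'rV[F]_n),
    (forall p, p \in s -> grouplike p.2) /\ u = \sum_(p <- s) p.1 *: p.2.

(* U (x) W inside M (x) M, for row spaces U, W *)
Definition in_tens (U W : 'M[F]_n) (A : 'M[F]_n) : Prop :=
  (A <= W)%MS /\ (A^T <= U)%MS.
Definition subcoalg (D : 'M[F]_n) : Prop :=
  forall u : 'rV[F]_n, (u <= D)%MS -> in_tens D D (comul u).
Definition simple_subcoalg (D : 'M[F]_n) : Prop :=
  [/\ \rank D != 0%N, subcoalg D &
      forall E : 'M[F]_n, subcoalg E -> (E <= D)%MS -> \rank E = 0%N \/ (D <= E)%MS].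
(* membership in the coradical = sum of all simple subcoalgebras *)
Definition in_corad (u : 'rV[F]_n) : Prop :=
  forall R : 'M[F]_n, (forall D, simple_subcoalg D -> (D <= R)%MS) -> (u <= R)%MS.
(* membership in C_1 = Delta^{-1}(M (x) C_0 + C_0 (x) M) *)
Definition in_C1 (u : 'rV[F]_n) : Prop :=
  exists A B : 'M[F]_n, comul u = A + B /\
    (forall r, in_corad (row r A)) /\ (forall r, in_corad (row r B^T)).

Definition pointed : Prop := forall u, in_corad u <-> in_kG u.

Definition graded_space (Mg : nat -> 'M[F]_n) : Prop :=
  exists K : nat, (forall i, (K <= i)%N -> Mg i = 0) /\
    (1%:M <= \sum_(i < K) Mg i)%MS /\ mxdirect (\sum_(i < K) Mg i).

Definition grading_respected (Mg : nat -> 'M[F]_n) : Prop :=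
  (forall i j u v, (u <= Mg i)%MS -> (v <= Mg j)%MS -> (mulM u v <= Mg (i + j)%N)%MS)/\
      (unitM <= Mg 0)%MS /\
      (forall k u, (u <= Mg k)%MS -> exists A : 'I_k.+1 -> 'M[F]_n,
          comul u = \sum_(i < k.+1) A i /\ forall i : 'I_k.+1, in_tens (Mg i) (Mg (k - i)%N) (A i)) /\
      (forall k u, (0 < k)%N -> (u <= Mg k)%MS -> counit u = 0) /\
      (forall k u, (u <= Mg k)%MS -> (Sa u <= Mg k)%MS) /\
      (forall i j k u v w, (u <= Mg i)%MS -> (v <= Mg j)%MS -> (w <= Mg k)%MS ->
          (0 < i + j + k)%N -> PhiV u v w = 0) /\
      (forall k u, (0 < k)%N -> (u <= Mg k)%MS ->
          linf alpha u = 0 /\ linf beta u = 0).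

Definition coradically_graded_pointed (Mg : nat -> 'M[F]_n) : Prop :=
  [/\ graded_space Mg, grading_respected Mg, pointed,
      (forall u, (u <= Mg 0)%MS <-> in_kG u) &
      (forall u, (u <= Mg 0 + Mg 1)%MS <-> in_C1 u)].

Definition generated_by (P : 'rV[F]_n -> Prop) : Prop :=
  forall W : 'M[F]_n,
    (forall u, P u -> (u <= W)%MS) ->
    (forall u v, (u <= W)%MS -> (v <= W)%MS -> (mulM u v <= W)%MS) ->
    forall u : 'rV[F]_n, (u <= W)%MS.

(* x1^{e1} x2^{e2} x3^{e3} for e : 'I_3 -> 'I_2 *)
Definition pw (x : 'rV[F]_n) (e : 'I_2) : 'rV[F]_n := if val e == 0%N then unitM else x.
Definition o0 : 'I_3 := @Ordinal 3 0 isT.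
Definition o1 : 'I_3 := @Ordinal 3 1 isT.
Definition o2 : 'I_3 := @Ordinal 3 2 isT.
Definition gelt (xs : 'I_3 -> 'rV[F]_n) (e : 'I_3 -> 'I_2) : 'rV[F]_n :=
  mulM (mulM (pw (xs o0) (e o0)) (pw (xs o1) (e o1))) (pw (xs o2) (e o2)).

Definition grouplikes_Z2cube (xs : 'I_3 -> 'rV[F]_n) : Prop :=
  [/\ forall l, grouplike (xs l),
      forall l, mulM (xs l) (xs l) = unitM,
      forall l m, mulM (xs l) (xs m) = mulM (xs m) (xs l),
      forall e e' : 'I_3 -> 'I_2, gelt xs e = gelt xs e' -> forall l, e l = e' l &
      forall u, grouplike u <-> exists e, u = gelt xs e].

End MajidDefs.

Definition phi_form (F : fieldType) (a : 'I_3 -> bool) (b : 'I_3 -> 'I_3 -> bool)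
    (i j k : 'I_3 -> 'I_2) : F :=
  (\prod_(l < 3) (-1) ^+ (a l * i l * ((j l + k l)./2))%N) *
  \prod_(s < 3) \prod_(t < 3 | (s < t)%N) (-1) ^+ (b s t * i t * ((j s + k s)./2))%N.

(* Let g be a group-like with g^2 = 1 and Y a skew-primitive with
   Delta Y = Y (x) 1 + y (x) Y.  Since the associator vanishes as soon as one
   argument has positive degree, quasi-associativity on (g,g,Y), (g,Y,g) and
   (Y,g,g) yields g(gY) = Phi(g,g,y) Y, g(Yg) = Phi(g,y,g) (gY)g and
   Y = Phi(y,g,g) (Yg)g.  Comultiplying X_t X_s = q X_s X_t shows that X_t
   commutes with x_s, and x_t with X_s, up to the same scalar q.  For the given
   associator the three relations then read q^2 (-1)^(a_st) = 1 for the pair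
   (x_s, X_t) and q^2 = 1 for the pair (x_t, X_s), so (-1)^(a_st) = 1 and
   a_st = 0 since the characteristic is not 2. *)
From HB Require Import structures.
From mathcomp Require Import all_boot all_order all_algebra.
From mathcomp Require Import ring.
Import Order.TTheory GRing.Theory Num.Theory.
Local Open Scope ring_scope.
Set Implicit Arguments. Unset Strict Implicit. Unset Printing Implicit Defensive.

Section MajidAlgebra.
Variables (F : fieldType) (n : nat) (M : majid_data F n).
Notation R := 'rV[F]_n.
Notation mul := (mulM M).
Notation bas := (@bas F n).

Lemma basE a k : bas a 0 k = (k == a)%:R :> F.
Proof. by rewrite /bas mxE eqxx. Qed.

Lemma sum_bas (y : R) : \sum_i y 0 i *: bas i = y.
Proof. by rewrite [RHS]row_sum_delta. Qed.

Lemma sumZZ {V : lmodType F} (I : finType) (c d : I -> F) (v : V) :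
  \sum_i c i *: (d i *: v) = (\sum_i c i * d i) *: v.
Proof. by rewrite scaler_suml; apply: eq_bigr => i _; rewrite scalerA. Qed.

Lemma sumZs {V : lmodType F} (I : finType) (c : I -> F) s (f : I -> V) :
  \sum_i c i *: (s *: f i) = s *: \sum_i c i *: f i.
Proof. by rewrite scaler_sumr; apply: eq_bigr => i _; rewrite !scalerA mulrC. Qed.

(** * Linear algebra of the structure maps *)

Lemma mulMDl u v w : mul (u + v) w = mul u w + mul v w.
Proof.
rewrite /mulM -big_split /=; apply: eq_bigr => i _.
by rewrite -big_split /=; apply: eq_bigr => j _; rewrite mxE mulrDl scalerDl.
Qed.

Lemma mulMDr u v w : mul w (u + v) = mul w u + mul w v.
Proof.
rewrite /mulM -big_split /=; apply: eq_bigr => i _.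
by rewrite -big_split /=; apply: eq_bigr => j _; rewrite mxE mulrDr scalerDl.
Qed.

Lemma mulMZl c u w : mul (c *: u) w = c *: mul u w.
Proof.
rewrite /mulM scaler_sumr; apply: eq_bigr => i _.
by rewrite scaler_sumr; apply: eq_bigr => j _; rewrite mxE scalerA mulrA.
Qed.

Lemma mulMZr c u w : mul w (c *: u) = c *: mul w u.
Proof.
rewrite /mulM scaler_sumr; apply: eq_bigr => i _.
by rewrite scaler_sumr; apply: eq_bigr => j _; rewrite mxE scalerA mulrCA.
Qed.

Lemma mulM0l w : mul 0 w = 0.
Proof. by have := mulMZl 0 0 w; rewrite !scale0r. Qed.

Lemma mulM0r w : mul w 0 = 0.
Proof. by have := mulMZr 0 0 w; rewrite !scale0r. Qed.

Lemma mulM_suml (I : finType) (c : I -> F) (f : I -> R) v :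
  mul (\sum_i c i *: f i) v = \sum_i c i *: mul (f i) v.
Proof.
rewrite (big_morph (mul^~ v) (fun a b => mulMDl a b v) (mulM0l v)).
by apply: eq_bigr => i _; rewrite mulMZl.
Qed.

Lemma mulM_sumr (I : finType) (c : I -> F) (f : I -> R) v :
  mul v (\sum_i c i *: f i) = \sum_i c i *: mul v (f i).
Proof.
rewrite (big_morph (mul v) (fun a b => mulMDr a b v) (mulM0r v)).
by apply: eq_bigr => i _; rewrite mulMZr.
Qed.

Lemma sum_mull (p v : R) : \sum_i p 0 i *: mul (bas i) v = mul p v.
Proof. by rewrite -mulM_suml sum_bas. Qed.

Lemma sum_mulr (p v : R) : \sum_i p 0 i *: mul v (bas i) = mul v p.
Proof. by rewrite -mulM_sumr sum_bas. Qed.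

Lemma mul1M u : unital M -> mul (unitM M) u = u.
Proof.
move=> un; rewrite -sum_mulr -[RHS]sum_bas.
by apply: eq_bigr => i _; rewrite (un i).1.
Qed.

Lemma mulM1 u : unital M -> mul u (unitM M) = u.
Proof.
move=> un; rewrite -sum_mull -[RHS]sum_bas.
by apply: eq_bigr => i _; rewrite (un i).2.
Qed.

Lemma tensE (p q : R) i j : tens p q i j = p 0 i * q 0 j.
Proof. by rewrite /tens mxE big_ord1 mxE. Qed.

Lemma tensDl (u u' v : R) : tens (u + u') v = tens u v + tens u' v.
Proof. by apply/matrixP => i j; rewrite [RHS]mxE !tensE mxE mulrDl. Qed.

Lemma tensZl c (u v : R) : tens (c *: u) v = c *: tens u v.
Proof. by apply/matrixP => i j; rewrite [RHS]mxE !tensE mxE mulrA. Qed.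

Lemma tensZr c (u v : R) : tens u (c *: v) = c *: tens u v.
Proof. by apply/matrixP => i j; rewrite [RHS]mxE !tensE mxE mulrCA. Qed.

Lemma tensNl (u v : R) : tens (- u) v = - tens u v.
Proof. by rewrite -scaleN1r tensZl scaleN1r. Qed.

Lemma tens_suml (I : finType) (c : I -> F) (f : I -> R) v :
  tens (\sum_i c i *: f i) v = \sum_i c i *: tens (f i) v.
Proof.
apply/matrixP => i j; rewrite tensE !summxE mulr_suml.
by apply: eq_bigr => k _; rewrite mxE [in RHS]mxE tensE mulrA.
Qed.

Lemma tens_sumr (I : finType) (c : I -> F) (f : I -> R) v :
  tens v (\sum_i c i *: f i) = \sum_i c i *: tens v (f i).
Proof.
apply/matrixP => i j; rewrite tensE !summxE mulr_sumr.
by apply: eq_bigr => k _; rewrite mxE [in RHS]mxE tensE mulrCA.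
Qed.

Lemma nz_coord (u : R) : u != 0 -> exists k, u 0 k != 0.
Proof.
move=> u0; apply/existsP; apply: contraNT u0 => /existsPn u0.
by apply/eqP/rowP => k; rewrite mxE; apply/eqP; rewrite -[_ == _]negbK u0.
Qed.

Lemma tens_eq0 (u v : R) : tens u v = 0 -> v != 0 -> u = 0.
Proof.
move=> e /nz_coord [j vj]; apply/rowP => k; rewrite mxE.
have /eqP := congr1 (fun A : 'M[F]_n => A k j) e.
by rewrite tensE mxE mulf_eq0 (negbTE vj) orbF => /eqP.
Qed.

Lemma tens_indep (u1 v1 u2 v2 : R) : tens u1 v1 = tens u2 v2 -> v2 != 0 ->
  (forall c, v1 != c *: v2) -> u1 = 0 /\ u2 = 0.
Proof.
move=> e v20 v1_nprop.
have u10 : u1 = 0.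
  apply/eqP/negPn/negP => /nz_coord [k uk].
  case/negP: (v1_nprop (u2 0 k / u1 0 k)); apply/eqP/rowP => j; rewrite mxE.
  have := congr1 (fun A : 'M[F]_n => A k j) e; rewrite !tensE => ekj.
  by apply: (mulfI uk); rewrite ekj; field.
split=> //; apply: tens_eq0 v20.
by rewrite -e u10 -(scale0r 0) tensZl scale0r.
Qed.

Lemma comulD u v : comul M (u + v) = comul M u + comul M v.
Proof. by rewrite /comul -big_split; apply: eq_bigr => i _; rewrite mxE scalerDl. Qed.

Lemma comulZ c u : comul M (c *: u) = c *: comul M u.
Proof. by rewrite /comul scaler_sumr; apply: eq_bigr => i _; rewrite mxE scalerA. Qed.

Lemma comul_sum (I : finType) (c : I -> F) (f : I -> R) :
  comul M (\sum_i c i *: f i) = \sum_i c i *: comul M (f i).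
Proof.
have comul0 : comul M 0 = 0 by have := comulZ 0 0; rewrite !scale0r.
rewrite (big_morph (comul M) comulD comul0).
by apply: eq_bigr => i _; rewrite comulZ.
Qed.

Lemma counit_grouplike g : counital M -> grouplike M g -> counit M g = 1.
Proof.
move=> [eps_l _] [g0 cg].
have eps_comul j : \sum_i eps M i * comul M g i j = g 0 j.
  under eq_bigr => i _ do rewrite /comul summxE mulr_sumr.
  rewrite exchange_big /=.
  under eq_bigr => k _ do (under eq_bigr => i _ do rewrite mxE mulrCA;
    rewrite -mulr_sumr eps_l).
  rewrite (bigD1 j) //= eqxx mulr1 big1 ?addr0 // => k kj.
  by rewrite (negbTE kj) mulr0.
have : (counit M g - 1) *: g == 0.
  apply/eqP/rowP => j; rewrite !mxE mulrBl mul1r; apply/eqP; rewrite subr_eq0.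
  rewrite -{2}eps_comul cg /counit mulr_suml.
  by apply/eqP/eq_bigr => k _; rewrite tensE /eps; ring.
by rewrite scaler_eq0 (negbTE g0) orbF subr_eq0 => /eqP.
Qed.

(** * Sweedler sums over elements of M (x) M *)

(* [sweedler A G] sums [G a1 a2] over [A = sum a1 (x) a2]; the Sweedler sum
   [sw2 k] of the axioms is [sweedler (D_c M k)]. *)
Definition sweedler {V : lmodType F} (A : 'M[F]_n) (G : 'I_n -> 'I_n -> V) : V :=
  \sum_i \sum_j A i j *: G i j.

Lemma eq_sweedler {V : lmodType F} A (G G' : 'I_n -> 'I_n -> V) :
  (forall i j, G i j = G' i j) -> sweedler A G = sweedler A G'.
Proof. by move=> e; apply: eq_bigr => i _; apply: eq_bigr => j _; rewrite e. Qed.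

Lemma sweedlerDl {V : lmodType F} A B (G : 'I_n -> 'I_n -> V) :
  sweedler (A + B) G = sweedler A G + sweedler B G.
Proof.
rewrite /sweedler -big_split; apply: eq_bigr => i _.
by rewrite -big_split; apply: eq_bigr => j _; rewrite mxE scalerDl.
Qed.

Lemma sweedlerDr {V : lmodType F} A (G H : 'I_n -> 'I_n -> V) :
  sweedler A (fun i j => G i j + H i j) = sweedler A G + sweedler A H.
Proof.
rewrite /sweedler -big_split; apply: eq_bigr => i _.
by rewrite -big_split; apply: eq_bigr => j _; rewrite scalerDr.
Qed.

Lemma sweedler_suml {V : lmodType F} (I : finType) (c : I -> F) (A : I -> 'M[F]_n)
    (G : 'I_n -> 'I_n -> V) :
  sweedler (\sum_k c k *: A k) G = \sum_k c k *: sweedler (A k) G.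
Proof.
rewrite /sweedler; apply/esym; under eq_bigr => k _ do rewrite scaler_sumr.
rewrite exchange_big; apply: eq_bigr => i _.
under eq_bigr => k _ do rewrite scaler_sumr.
rewrite exchange_big; apply: eq_bigr => j _.
rewrite summxE scaler_suml; apply: eq_bigr => k _.
by rewrite mxE scalerA.
Qed.

Lemma sweedler_sumr {V : lmodType F} (I : finType) (c : I -> F) A
    (H : I -> 'I_n -> 'I_n -> V) :
  sweedler A (fun i j => \sum_k c k *: H k i j) = \sum_k c k *: sweedler A (H k).
Proof.
rewrite /sweedler; apply/esym; under eq_bigr => k _ do rewrite scaler_sumr.
rewrite exchange_big; apply: eq_bigr => i _.
under eq_bigr => k _ do rewrite scaler_sumr.
rewrite exchange_big; apply: eq_bigr => j _.
rewrite scaler_sumr; apply: eq_bigr => k _.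
by rewrite !scalerA mulrC.
Qed.

Lemma sweedler_tens {V : lmodType F} p q (G : 'I_n -> 'I_n -> V) :
  sweedler (tens p q) G = \sum_i p 0 i *: \sum_j q 0 j *: G i j.
Proof.
apply: eq_bigr => i _; rewrite scaler_sumr; apply: eq_bigr => j _.
by rewrite tensE scalerA.
Qed.

Definition sweedler3 (f : 'I_n -> 'I_n -> 'I_n -> 'I_n -> 'I_n -> 'I_n -> R)
    (A B C : 'M[F]_n) : R :=
  sweedler A (fun a1 a2 => sweedler B (fun b1 b2 =>
    sweedler C (fun c1 c2 => f a1 a2 b1 b2 c1 c2))).

Lemma sweedler3D1 f A A' B C :
  sweedler3 f (A + A') B C = sweedler3 f A B C + sweedler3 f A' B C.
Proof. exact: sweedlerDl. Qed.

Lemma sweedler3D2 f A B B' C :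
  sweedler3 f A (B + B') C = sweedler3 f A B C + sweedler3 f A B' C.
Proof.
by rewrite /sweedler3; under eq_sweedler => a1 a2 do rewrite sweedlerDl;
  rewrite sweedlerDr.
Qed.

Lemma sweedler3D3 f A B C C' :
  sweedler3 f A B (C + C') = sweedler3 f A B C + sweedler3 f A B C'.
Proof.
rewrite /sweedler3.
under eq_sweedler => a1 a2 do under eq_sweedler => b1 b2 do rewrite sweedlerDl.
by under eq_sweedler => a1 a2 do rewrite sweedlerDr; rewrite sweedlerDr.
Qed.

Lemma sweedler3_comul f u v w :
  sweedler3 f (comul M u) (comul M v) (comul M w) =
  \sum_a u 0 a *: \sum_b v 0 b *: \sum_c w 0 c *:
    sweedler3 f (D_c M a) (D_c M b) (D_c M c).
Proof.
rewrite /sweedler3 /comul sweedler_suml; apply: eq_bigr => a _; congr (_ *: _).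
under eq_sweedler => a1 a2 do rewrite sweedler_suml.
rewrite sweedler_sumr; apply: eq_bigr => b _; congr (_ *: _).
under eq_sweedler => a1 a2 do under eq_sweedler => b1 b2 do rewrite sweedler_suml.
by under eq_sweedler => a1 a2 do rewrite sweedler_sumr; rewrite sweedler_sumr.
Qed.

Lemma sweedler3_tens f p1 p2 r1 r2 y1 y2 :
  sweedler3 f (tens p1 p2) (tens r1 r2) (tens y1 y2) =
  \sum_a1 p1 0 a1 *: \sum_a2 p2 0 a2 *: \sum_b1 r1 0 b1 *: \sum_b2 r2 0 b2 *:
  \sum_c1 y1 0 c1 *: \sum_c2 y2 0 c2 *: f a1 a2 b1 b2 c1 c2.
Proof.
rewrite /sweedler3 sweedler_tens.
under eq_bigr => a1 _ do under eq_bigr => a2 _ do rewrite sweedler_tens.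
by under eq_bigr => a1 _ do under eq_bigr => a2 _ do under eq_bigr => b1 _ do
  under eq_bigr => b2 _ do rewrite sweedler_tens.
Qed.

Local Notation qassoc_lhs := (sweedler3 (fun a1 a2 b1 b2 c1 c2 =>
  phi M a2 b2 c2 *: mul (bas a1) (mul (bas b1) (bas c1)))).
Local Notation qassoc_rhs := (sweedler3 (fun a1 a2 b1 b2 c1 c2 =>
  phi M a1 b1 c1 *: mul (mul (bas a2) (bas b2)) (bas c2))).

Lemma quasi_assocE u v w : quasi_assoc M ->
  qassoc_lhs (comul M u) (comul M v) (comul M w) =
  qassoc_rhs (comul M u) (comul M v) (comul M w).
Proof.
move=> qa; rewrite !sweedler3_comul.
do 3![apply: eq_bigr => ? _; congr (_ *: _)].
exact: qa.
Qed.

Lemma PhiV_sum (p r y : R) :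
  PhiV M p r y = \sum_i p 0 i * (\sum_j r 0 j * (\sum_k y 0 k * phi M i j k)).
Proof.
apply: eq_bigr => i _; rewrite mulr_sumr; apply: eq_bigr => j _.
by rewrite !mulr_sumr; apply: eq_bigr => k _; rewrite !mulrA.
Qed.

Lemma qassoc_lhs_tens p1 p2 r1 r2 y1 y2 :
  qassoc_lhs (tens p1 p2) (tens r1 r2) (tens y1 y2) =
  PhiV M p2 r2 y2 *: mul p1 (mul r1 y1).
Proof.
rewrite sweedler3_tens.
under eq_bigr => a1 _ do under eq_bigr => a2 _ do under eq_bigr => b1 _ do
  under eq_bigr => b2 _ do under eq_bigr => c1 _ do rewrite sumZZ.
under eq_bigr => a1 _ do under eq_bigr => a2 _ do under eq_bigr => b1 _ do
  under eq_bigr => b2 _ do rewrite sumZs -mulM_sumr sum_mulr.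
under eq_bigr => a1 _ do under eq_bigr => a2 _ do under eq_bigr => b1 _ do
  rewrite sumZZ.
under eq_bigr => a1 _ do under eq_bigr => a2 _ do
  rewrite sumZs -mulM_sumr -mulM_suml sum_bas.
under eq_bigr => a1 _ do rewrite sumZZ.
by rewrite sumZs sum_mull PhiV_sum.
Qed.

Lemma qassoc_rhs_tens p1 p2 r1 r2 y1 y2 :
  qassoc_rhs (tens p1 p2) (tens r1 r2) (tens y1 y2) =
  PhiV M p1 r1 y1 *: mul (mul p2 r2) y2.
Proof.
rewrite sweedler3_tens.
under eq_bigr => a1 _ do under eq_bigr => a2 _ do under eq_bigr => b1 _ do
  under eq_bigr => b2 _ do under eq_bigr => c1 _ do rewrite sumZs sum_mulr.
under eq_bigr => a1 _ do under eq_bigr => a2 _ do under eq_bigr => b1 _ do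
  under eq_bigr => b2 _ do rewrite sumZZ.
under eq_bigr => a1 _ do under eq_bigr => a2 _ do under eq_bigr => b1 _ do
  rewrite sumZs -mulM_suml -mulM_sumr sum_bas.
under eq_bigr => a1 _ do under eq_bigr => a2 _ do rewrite sumZZ.
under eq_bigr => a1 _ do rewrite sumZs -mulM_suml -mulM_suml sum_bas.
by rewrite sumZZ PhiV_sum.
Qed.

Definition mul_tens (A B : 'M[F]_n) : 'M[F]_n :=
  sweedler A (fun a1 a2 => sweedler B (fun b1 b2 =>
    tens (mul (bas a1) (bas b1)) (mul (bas a2) (bas b2)))).

Lemma mul_tensDl A A' B : mul_tens (A + A') B = mul_tens A B + mul_tens A' B.
Proof. exact: sweedlerDl. Qed.

Lemma mul_tensDr A B B' : mul_tens A (B + B') = mul_tens A B + mul_tens A B'.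
Proof.
by rewrite /mul_tens; under eq_sweedler => a1 a2 do rewrite sweedlerDl;
  rewrite sweedlerDr.
Qed.

Lemma mul_tens_tens p q r s : mul_tens (tens p q) (tens r s) = tens (mul p r) (mul q s).
Proof.
rewrite /mul_tens sweedler_tens.
under eq_bigr => a1 _ do under eq_bigr => a2 _ do rewrite sweedler_tens.
under eq_bigr => a1 _ do under eq_bigr => a2 _ do under eq_bigr => b1 _ do
  rewrite -tens_sumr sum_mulr.
under eq_bigr => a1 _ do under eq_bigr => a2 _ do rewrite -tens_suml sum_mulr.
under eq_bigr => a1 _ do rewrite -tens_sumr sum_mull.
by rewrite -tens_suml sum_mull.
Qed.

Lemma comul_mul u v : mul_coalg_map M ->
  comul M (mul u v) = mul_tens (comul M u) (comul M v).
Proof.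
move=> [cm _]; rewrite -(sum_mull u v).
under eq_bigr => a _ do rewrite -sum_mulr.
rewrite /mul_tens {2 3}/comul sweedler_suml comul_sum.
apply: eq_bigr => a _; congr (_ *: _); rewrite comul_sum.
under eq_sweedler => a1 a2 do rewrite sweedler_suml.
by rewrite sweedler_sumr; apply: eq_bigr => b _; rewrite cm.
Qed.

Lemma PhiV_decl u v w : PhiV M u v w = \sum_a u 0 a * PhiV M (bas a) v w.
Proof.
rewrite /PhiV /trilin; under [RHS]eq_bigr => a _ do rewrite mulr_sumr.
rewrite [RHS]exchange_big; apply: eq_bigr => i _.
rewrite [RHS](bigD1 i) //= [X in _ + X]big1 ?addr0 => [|a /negbTE ai].
  rewrite mulr_sumr; apply: eq_bigr => j _; rewrite mulr_sumr; apply: eq_bigr => k _.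
  by rewrite basE eqxx mul1r !mulrA.
by rewrite big1 ?mulr0 // => j _; rewrite big1 // => k _; rewrite basE eq_sym ai !mul0r.
Qed.

Lemma PhiV_decm u v w : PhiV M u v w = \sum_b v 0 b * PhiV M u (bas b) w.
Proof.
rewrite /PhiV /trilin; under [RHS]eq_bigr => b _ do rewrite mulr_sumr.
rewrite [RHS]exchange_big; apply: eq_bigr => i _.
under [RHS]eq_bigr => b _ do rewrite mulr_sumr.
rewrite [RHS]exchange_big; apply: eq_bigr => j _.
rewrite [RHS](bigD1 j) //= [X in _ + X]big1 ?addr0 => [|b /negbTE bj].
  by rewrite mulr_sumr; apply: eq_bigr => k _; rewrite basE eqxx mulr1; ring.
by rewrite big1 ?mulr0 // => k _; rewrite basE eq_sym bj mulr0 !mul0r.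
Qed.

Lemma PhiV_decr u v w : PhiV M u v w = \sum_c w 0 c * PhiV M u v (bas c).
Proof.
rewrite /PhiV /trilin; under [RHS]eq_bigr => c _ do rewrite mulr_sumr.
rewrite [RHS]exchange_big; apply: eq_bigr => i _.
under [RHS]eq_bigr => c _ do rewrite mulr_sumr.
rewrite [RHS]exchange_big; apply: eq_bigr => j _.
under [RHS]eq_bigr => c _ do rewrite mulr_sumr.
rewrite [RHS]exchange_big; apply: eq_bigr => k _.
rewrite [RHS](bigD1 k) //= [X in _ + X]big1 ?addr0 => [|c /negbTE ck].
  by rewrite basE eqxx mulr1; ring.
by rewrite basE eq_sym ck mulr0 mul0r mulr0.
Qed.

Lemma PhiV_unit u w : normalized M ->
  [/\ PhiV M u (unitM M) w = counit M u * counit M w,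
      PhiV M (unitM M) u w = counit M u * counit M w &
      PhiV M u w (unitM M) = counit M u * counit M w].
Proof.
move=> nm; split; [rewrite PhiV_decl | rewrite PhiV_decm | rewrite PhiV_decl];
  rewrite /counit mulr_suml; apply: eq_bigr => a _; rewrite -mulrA; congr (_ * _);
  [rewrite PhiV_decr | rewrite PhiV_decr | rewrite PhiV_decm];
  rewrite mulr_sumr; apply: eq_bigr => b _.
- by rewrite (nm a b).1 /eps; ring.
- by rewrite (nm a b).2.1 /eps; ring.
- by rewrite (nm a b).2.2 /eps; ring.
Qed.

(** * Skew-primitive elements against group-likes of order two *)

Lemma scale_multiple_eq0 (V : lmodType F) (Y W : V) (c d : F) :
  Y != 0 -> Y = c *: W -> d *: W = 0 -> d = 0.
Proof.
move=> Y0 eY /eqP; rewrite scaler_eq0 => /orP [/eqP //|/eqP W0].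
by move: Y0; rewrite eY W0 scaler0 eqxx.
Qed.

Hypotheses (qa : quasi_assoc M) (nm : normalized M) (un : unital M)
  (cl : counital M) (cm : mul_coalg_map M).

Definition assoc_vanishes (g Y : R) :=
  [/\ PhiV M g g Y = 0, PhiV M g Y g = 0 & PhiV M Y g g = 0].

Lemma grouplike_skew_relations (g Y y : R) :
  grouplike M g -> mul g g = unitM M ->
  comul M Y = tens Y (unitM M) + tens y Y -> assoc_vanishes g Y ->
  [/\ mul g (mul g Y) = PhiV M g g y *: Y,
      mul g (mul Y g) = PhiV M g y g *: mul (mul g Y) g &
      Y = PhiV M y g g *: mul (mul Y g) g].
Proof.
move=> gl gg cY [p1 p2 p3]; have cg := gl.2; have eg := counit_grouplike cl gl.
have [n1 n2 n3] := PhiV_unit g g nm.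
split.
- have := quasi_assocE g g Y qa.
  rewrite cg cY !sweedler3D3 !qassoc_lhs_tens !qassoc_rhs_tens.
  by rewrite p1 n3 eg mulr1 gg !(mul1M _ un) !scale0r addr0 add0r scale1r.
- have := quasi_assocE g Y g qa.
  rewrite cg cY !sweedler3D2 !qassoc_lhs_tens !qassoc_rhs_tens.
  by rewrite p2 n1 eg mulr1 !(mulM1 _ un) !scale0r addr0 add0r scale1r.
- have := quasi_assocE Y g g qa.
  rewrite cg cY !sweedler3D1 !qassoc_lhs_tens !qassoc_rhs_tens.
  by rewrite p3 n2 eg mulr1 gg !(mulM1 _ un) !(mul1M _ un) !scale0r addr0 add0r
    scale1r.
Qed.

Lemma grouplike_skew_commute_r (g Y y : R) c :
  grouplike M g -> mul g g = unitM M ->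
  comul M Y = tens Y (unitM M) + tens y Y -> assoc_vanishes g Y -> Y != 0 ->
  mul Y g = c *: mul g Y ->
  c ^+ 2 * PhiV M g g y * PhiV M y g g = PhiV M g y g.
Proof.
move=> gl gg cY van Y0 comm.
have [e1 e2 e3] := grouplike_skew_relations gl gg cY van.
set f1 := PhiV M g g y in e1 *; set f2 := PhiV M g y g in e2 *.
set f3 := PhiV M y g g in e3 *.
have eY : Y = (f3 * c) *: mul (mul g Y) g by rewrite {1}e3 comm mulMZl scalerA.
have e2' : (c * f1) *: Y = f2 *: mul (mul g Y) g.
  by rewrite -e2 comm mulMZr e1 scalerA.
apply/eqP; rewrite -subr_eq0; apply/eqP; apply: (scale_multiple_eq0 Y0 eY).
rewrite scalerBl -e2' {2}eY !scalerA; apply/eqP; rewrite subr_eq0; apply/eqP.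
by congr (_ *: _); ring.
Qed.

Lemma grouplike_skew_commute_l (g Y y : R) c :
  grouplike M g -> mul g g = unitM M ->
  comul M Y = tens Y (unitM M) + tens y Y -> assoc_vanishes g Y -> Y != 0 ->
  mul g Y = c *: mul Y g ->
  PhiV M g g y * PhiV M y g g = c ^+ 2 * PhiV M g y g.
Proof.
move=> gl gg cY van Y0 comm.
have [e1 e2 e3] := grouplike_skew_relations gl gg cY van.
have e1' : PhiV M g g y *: Y = (c ^+ 2 * PhiV M g y g) *: mul (mul Y g) g.
  by rewrite -e1 {1}comm mulMZr e2 comm mulMZl !scalerA; congr (_ *: _); ring.
apply/eqP; rewrite -subr_eq0; apply/eqP; apply: (scale_multiple_eq0 Y0 e3).
by rewrite scalerBl -scalerA -e3 e1' subrr.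
Qed.

Lemma skew_primitive_not_proportional (Ys Yt ys yt : R) :
  comul M Ys = tens Ys (unitM M) + tens ys Ys ->
  comul M Yt = tens Yt (unitM M) + tens yt Yt ->
  Ys != 0 -> ys != yt -> forall c, Ys != c *: Yt.
Proof.
move=> cs ct s0 st c; apply/eqP => e.
have : tens ys Ys = tens yt Ys.
  have := cs; rewrite {1}e comulZ ct scalerDr -tensZl -tensZr -e => /addrI.
  by move=> ->.
move/eqP; rewrite -subr_eq0 -tensNl -tensDl => /eqP /tens_eq0 /(_ s0) /eqP.
by rewrite subr_eq0 (negbTE st).
Qed.

(* Comparing the components of Delta(Yt Ys) = q Delta(Ys Yt) in M (x) Ys and
   M (x) Yt, which are independent since Ys and Yt are not proportional. *)
Lemma skew_commutation_grouplikes (Yt Ys yt ys : R) q :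
  comul M Yt = tens Yt (unitM M) + tens yt Yt ->
  comul M Ys = tens Ys (unitM M) + tens ys Ys ->
  mul Yt Ys = q *: mul Ys Yt -> mul yt ys = mul ys yt ->
  Yt != 0 -> (forall c, Ys != c *: Yt) ->
  mul Yt ys = q *: mul ys Yt /\ mul yt Ys = q *: mul Ys yt.
Proof.
move=> ct cs comm_Y comm_y t0 np.
have cancel_outer (a b c d b' c' : 'M[F]_n) :
    (a + b) + (c + d) = (a + b') + (c' + d) -> b + c = b' + c'.
  rewrite (addrC c d) (addrC c' d) [LHS]addrACA [RHS]addrACA.
  exact: addrI.
have h1 := comul_mul Yt Ys cm; have h2 := comul_mul Ys Yt cm.
rewrite ct cs !mul_tensDl !mul_tensDr !mul_tens_tens !(mul1M _ un) !(mulM1 _ un)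
  in h1 h2.
have := congr1 (comul M) comm_Y; rewrite comulZ h1 h2 comm_Y comm_y.
rewrite !scalerDr tensZl tensZr -!tensZl => /cancel_outer key.
have : tens (mul Yt ys - q *: mul ys Yt) Ys = tens (q *: mul Ys yt - mul yt Ys) Yt.
  by rewrite !tensDl !tensNl; apply/eqP; rewrite subr_eq addrAC -key addrK.
case/tens_indep => // /eqP e1 /eqP e2.
by rewrite !subr_eq0 in e1 e2; split; apply/eqP; rewrite // eq_sym.
Qed.

End MajidAlgebra.

Lemma grouplike_deg0 (F : fieldType) n (M : majid_data F n) (Mg : nat -> 'M[F]_n) g :
  (forall u, (u <= Mg 0%N)%MS <-> in_kG M u) -> grouplike M g -> (g <= Mg 0%N)%MS.
Proof.
move=> kG0 gl; apply/(kG0 g).2; exists [:: (1, g)]; split.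
  by move=> p; rewrite inE => /eqP ->.
by rewrite big_seq1 scale1r.
Qed.

Lemma assoc_vanishes_graded (F : fieldType) n (M : majid_data F n)
    (Mg : nat -> 'M[F]_n) g Y :
  grading_respected M Mg -> (g <= Mg 0%N)%MS -> (Y <= Mg 1%N)%MS ->
  assoc_vanishes M g Y.
Proof.
case=> [_ [_ [_ [_ [_ [phi_deg _]]]]]] g0 Y1; split.
- exact: (phi_deg 0%N 0%N 1%N).
- exact: (phi_deg 0%N 1%N 0%N).
- exact: (phi_deg 1%N 0%N 0%N).
Qed.

(** * The group-likes x1, x2, x3 and the associator formula *)

Definition expv (l : 'I_3) : 'I_3 -> 'I_2 := fun m => if m == l then ord_max else ord0.

Lemma ord3P (l : 'I_3) : [\/ l = o0, l = o1 | l = o2].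
Proof.
case: l => [[|[|[|//]]] pl];
  [constructor 1 | constructor 2 | constructor 3]; exact: val_inj.
Qed.

Lemma gelt_expv (F : fieldType) (n : nat) (M : majid_data F n) xs l :
  unital M -> gelt M xs (expv l) = xs l.
Proof.
by move=> un; case: (ord3P l) => ->;
  rewrite /gelt /pw /expv /= ?(mul1M _ un) ?(mulM1 _ un).
Qed.

Lemma grouplikes_Z2cube_neq (F : fieldType) (n : nat) (M : majid_data F n) xs
    (s t : 'I_3) :
  unital M -> grouplikes_Z2cube M xs -> s != t -> xs s != xs t.
Proof.
move=> un [_ _ _ inj _] st; apply/eqP => e.
have := inj (expv s) (expv t); rewrite !gelt_expv // => /(_ e s).
by rewrite /expv eqxx (negbTE st) => /(congr1 val).
Qed.

Lemma big_ord3_cond (R : comNzRingType) (P : pred 'I_3) (f : 'I_3 -> R) :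
  \prod_(i < 3 | P i) f i = (if P o0 then f o0 else 1) *
    (if P o1 then f o1 else 1) * (if P o2 then f o2 else 1).
Proof.
rewrite big_mkcond !big_ord_recl big_ord0 /= mulr1 mulrA.
have -> : lift ord0 (lift ord0 ord0) = o2 by apply: val_inj.
have -> : lift ord0 ord0 = o1 by apply: val_inj.
by have -> : ord0 = o0 by apply: val_inj.
Qed.

Lemma phi_form_expv (F : fieldType) a b (s t : 'I_3) : (s < t)%N ->
  [/\ phi_form F a b (expv s) (expv s) (expv t) = 1,
      phi_form F a b (expv t) (expv s) (expv s) = (-1) ^+ b s t,
      phi_form F a b (expv s) (expv t) (expv s) = 1,
      phi_form F a b (expv t) (expv t) (expv s) = 1 &
      phi_form F a b (expv s) (expv t) (expv t) = 1 /\
      phi_form F a b (expv t) (expv s) (expv t) = 1].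
Proof.
case: (ord3P s) (ord3P t) => -> [] -> //= _;
by rewrite /phi_form !big_ord3_cond /= ?muln0 ?muln1 ?mul0n ?expr0 ?mulr1 ?mul1r.
Qed.

Lemma signr_eq1_char0 (F : fieldType) (c : bool) :
  [pchar F] =i pred0 -> (-1) ^+ c = 1 :> F -> c = false.
Proof.
move=> /pcharf0P char0; case: c => //=; rewrite expr1 => h.
have : (2%:R : F) == 0 by rewrite -[2%N]/(1 + 1)%N natrD -{1}h addNr.
by rewrite char0.
Qed.

Theorem proposition5p5 (F : closedFieldType) (hchar : [pchar F] =i pred0)
    (n : nat) (M : majid_data F n) (Mg : nat -> 'M[F]_n)
    (N : nat) (hN : (3 <= N)%N) (X x : 'I_N -> 'rV[F]_n) (q : 'I_N -> 'I_N -> F)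
    (a : 'I_3 -> bool) (b : 'I_3 -> 'I_3 -> bool) :
  is_majid M ->
  coradically_graded_pointed M Mg ->
  grouplikes_Z2cube M (fun l => x (widen_ord hN l)) ->
  (forall i, grouplike M (x i)) ->
  (forall i, X i != 0 /\ (X i <= Mg 1%N)%MS) ->
  (forall i, comul M (X i) = tens (X i) (unitM M) + tens (x i) (X i)) ->
  (forall i j, i != j -> mulM M (X i) (X j) = q j i *: mulM M (X j) (X i)) ->
  generated_by M (fun u => grouplike M u \/ exists i, u = X i) ->
  (forall i j k : 'I_3 -> 'I_2,
     let g := gelt M (fun l => x (widen_ord hN l)) in
     PhiV M (g i) (g j) (g k) = phi_form F a b i j k) ->
  forall s t : 'I_3, (s < t)%N -> b s t = false.
Proof.
move=> [_ [cl [un [cm [qa [_ [nm _]]]]]]] [_ gr _ kG0 _] gZ gl hX cX qc _ hphi.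
move=> s t st; have [_ sq comm _ _] := gZ.
set xs := fun l => x (widen_ord hN l) in gZ hphi.
have phi_xs l1 l2 l3 : PhiV M (xs l1) (xs l2) (xs l3) =
    phi_form F a b (expv l1) (expv l2) (expv l3).
  by have := hphi (expv l1) (expv l2) (expv l3); rewrite /= !gelt_expv.
have van l i : assoc_vanishes M (xs l) (X i).
  exact: assoc_vanishes_graded gr (grouplike_deg0 kG0 (gl _)) (hX i).2.
have s_neq_t : s != t by rewrite neq_ltn st.
have ts : widen_ord hN t != widen_ord hN s.
  by apply: contra s_neq_t => /eqP[e]; apply/eqP/val_inj; rewrite /= e.
have np := skew_primitive_not_proportional (cX _) (cX _) (hX _).1
  (grouplikes_Z2cube_neq un gZ s_neq_t).
have [sw1 sw2] := skew_commutation_grouplikes un cm (cX _) (cX _) (qc _ _ ts)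
  (comm t s) (hX _).1 np.
have r1 := grouplike_skew_commute_r qa nm un cl (gl _) (sq s) (cX _) (van s _)
  (hX _).1 sw1.
have r2 := grouplike_skew_commute_l qa nm un cl (gl _) (sq t) (cX _) (van t _)
  (hX _).1 sw2.
have [p1 p2 p3 p4 [p5 p6]] := phi_form_expv F a b st.
rewrite !phi_xs p1 p2 p3 mulr1 in r1; rewrite !phi_xs p4 p5 p6 !mulr1 in r2.
by apply: (signr_eq1_char0 hchar); rewrite -r2 mul1r in r1.
Qed.
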